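(* Let $-1$ denote the automorphism of $\mathcal A_\theta^{alg}$ with $U_1\mapsto U_1^{-1}$, $U_2\mapsto U_2^{-1}$, and let $H^0(\mathcal A_\theta^{alg},{}_{-1}\mathcal A_\theta^{alg\ast})$ be the space of formal series $\varphi=\sum\varphi_{n,m}U_1^nU_2^m$ with $((-1)\cdot a)\varphi=\varphi a$ for all $a\in\mathcal A_\theta^{alg}$. Let $\mathbb Z_6$ be generated by the automorphism $-\omega$ with $U_1\mapsto U_2$, $U_2\mapsto\lambda^{-1/2}U_1^{-1}U_2$, acting termwise on this space. Then $H^0(\mathcal A_\theta^{alg},{}_{-1}\mathcal A_\theta^{alg\ast})^{\mathbb Z_6}\cong\mathbb C^2$.
   Context: Let $\theta\in\mathbb R\setminus\mathbb Q$, $\lambda=e^{2\pi i\theta}$, $\lambda^s:=e^{2\pi i\theta s}$. $\mathcal A_\theta^{alg}$ is the complex algebra of finite sums $\sum a_{n,m}U_1^nU_2^m$ with $U_1,U_2$ invertible and $U_2U_1=\lambda U_1U_2$; formal series $\sum_{(n,m)\in\mathbb Z^2}\varphi_{n,m}U_1^nU_2^m$ with arbitrary coefficients form an $\mathcal A_\theta^{alg}$-bimodule via multiplication. Termwise action of an automorphism $h$: $h\cdot\sum\varphi_{n,m}U_1^nU_2^m=\sum\varphi_{n,m}\,h\cdot(U_1^nU_2^m)$. *)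

From HB Require Import structures.
From Stdlib Require Import Reals ZArith.
From mathcomp Require Import all_boot all_order all_algebra.
From mathcomp Require Import Rstruct.
From mathcomp Require Import complex.
Set Implicit Arguments. Unset Strict Implicit. Unset Printing Implicit Defensive.
Import Order.TTheory GRing.Theory Num.Theory.

Definition Cplx := (Rdefinitions.R)[i].

Local Open Scope ring_scope.

Definition lam_pow (theta s : Rdefinitions.R) : Cplx :=
  Complex (Rtrigo_def.cos (2 * PI * theta * s)%R) (Rtrigo_def.sin (2 * PI * theta * s)%R).
Definition lam (theta : Rdefinitions.R) : Cplx := lam_pow theta 1%R.

(* A monomial term  c * U1^p * U2^q,  encoded as ((c, p), q). *)
Definition term := (Cplx * int * int)%type.
Definition tc (t : term) : Cplx := t.1.1.
Definition tp (t : term) : int := t.1.2.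
Definition tq (t : term) : int := t.2.

(* Product in A_theta using  U2 U1 = lambda U1 U2, hence
   U2^q U1^p' = lambda^(q p') U1^p' U2^q. *)
Definition tmul (theta : Rdefinitions.R) (a b : term) : term :=
  (tc a * tc b * lam theta ^ (tq a * tp b), tp a + tp b, tq a + tq b).
Definition tone : term := (1, 0, 0).
Definition tinv (theta : Rdefinitions.R) (a : term) : term :=
  ((tc a)^-1 * lam theta ^ (tp a * tq a), - tp a, - tq a).
Definition tpow (theta : Rdefinitions.R) (a : term) (n : int) : term :=
  match n with
  | Posz k => iter k (tmul theta a) tone
  | Negz k => iter k.+1 (tmul theta (tinv theta a)) tone
  end.

(* An automorphism given by the images g1, g2 of U1, U2 (each a monomial term);
   image of the monomial U1^n U2^m is h(U1)^n h(U2)^m. *)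
Definition himg (theta : Rdefinitions.R) (g1 g2 : term) (n m : int) : term :=
  tmul theta (tpow theta g1 n) (tpow theta g2 m).

(* Elements of A_theta^alg: finite sums of monomial terms. *)
Definition alg := seq term.
Definition act (theta : Rdefinitions.R) (g1 g2 : term) (a : alg) : alg :=
  map (fun t : term => let s := himg theta g1 g2 (tp t) (tq t) in
        ((tc t * tc s, tp s, tq s) : term)) a.

(* Formal series sum phi n m U1^n U2^m. *)
Definition series := int -> int -> Cplx.

(* Coefficient of U1^k U2^l in  a * phi  and  phi * a. *)
Definition lmul (theta : Rdefinitions.R) (a : alg) (phi : series) : series :=
  fun k l => \sum_(t <- a)
    tc (tmul theta t (phi (k - tp t) (l - tq t), k - tp t, l - tq t)).
Definition rmul (theta : Rdefinitions.R) (phi : series) (a : alg) : series :=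
  fun k l => \sum_(t <- a)
    tc (tmul theta (phi (k - tp t) (l - tq t), k - tp t, l - tq t) t).

Definition minus1_g1 : term := (1, -1, 0).
Definition minus1_g2 : term := (1, 0, -1).
Definition mom_g1 : term := (1, 0, 1).
Definition mom_g2 (theta : Rdefinitions.R) : term := (lam_pow theta (-1/2)%R, -1, 1).

Definition H0_twisted (theta : Rdefinitions.R) (phi : series) : Prop :=
  forall a : alg, lmul theta (act theta minus1_g1 minus1_g2 a) phi = rmul theta phi a.

(* Invariance under Z_6 = < -omega >, acting termwise:
   (-omega).phi = sum phi_{n,m} (-omega)(U1^n U2^m) equals phi. Since the
   exponent map of -omega is a bijection of Z^2, this says the coefficient of
   the image monomial equals (scalar of image) * phi_{n,m}. *)
Definition Z6_invariant (theta : Rdefinitions.R) (phi : series) : Prop :=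
  forall n m : int,
    let s := himg theta mom_g1 (mom_g2 theta) n m in
    phi (tp s) (tq s) = tc s * phi n m.

Definition inv_space (theta : Rdefinitions.R) (phi : series) : Prop :=
  H0_twisted theta phi /\ Z6_invariant theta phi.

(** Write [mu] for the square root [lambda^(1/2)].  The twisted trace condition
    against a single monomial [U1^p U2^q] says that [phi(k, l) mu^(-kl)] is
    unchanged when [(k, l)] moves by [(2p, 2q)], so [phi] is determined by its
    four values on [{0,1}^2].  In Weyl-ordered coordinates [-omega] acts on
    exponents by [(n, m) |-> (-m, n + m)], which fixes the class [(0, 0)] and
    permutes the other three parity classes cyclically; invariance therefore
    leaves exactly two free constants. *)
From Stdlib Require Import Reals ZArith FunctionalExtensionality.
From mathcomp Require Import all_boot all_order all_algebra.
From mathcomp Require Import Rstruct complex.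
From mathcomp Require Import zify ring.
Import Order.TTheory GRing.Theory Num.Theory.
Local Open Scope ring_scope.

Section SquareRoot.

Variable theta : Rdefinitions.R.

Lemma lam_powD s t : lam_pow theta s * lam_pow theta t = lam_pow theta (s + t)%R.
Proof.
rewrite /lam_pow /GRing.mul /= /mulc /=.
have -> : forall x, Rmult x (s + t) = Rmult x s + Rmult x t by move=> x; exact: mulrDr.
by rewrite cosD sinD; congr Complex => //; rewrite addrC mulrC [X in _ + X]mulrC.
Qed.

Lemma lam_pow0 : lam_pow theta 0 = 1.
Proof. by rewrite /lam_pow mulr0 cos_0 sin_0. Qed.

Definition sqrt_lam : Cplx := lam_pow theta (1/2).

Lemma sqrt_lam_neq0 : sqrt_lam != 0.
Proof.
have := lam_powD (1/2) (-1/2).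
rewrite (_ : (1/2 + -1/2 = 0)%R) ?lam_pow0; last by field.
rewrite -/sqrt_lam => h; apply/eqP => mu0; move: h.
by rewrite mu0 mul0r => /eqP; rewrite eq_sym oner_eq0.
Qed.

Lemma lam_pow_neg_half : lam_pow theta (-1/2) = sqrt_lam ^ (-1).
Proof.
apply: (mulfI sqrt_lam_neq0); rewrite lam_powD (_ : (1/2 + -1/2 = 0)%R); last by field.
by rewrite lam_pow0 exprN1 mulfV ?sqrt_lam_neq0.
Qed.

Lemma sqrt_lamXD (a b : int) : sqrt_lam ^ a * sqrt_lam ^ b = sqrt_lam ^ (a + b).
Proof. by rewrite expfzDr // sqrt_lam_neq0. Qed.

Lemma lamXz (z : int) : lam theta ^ z = sqrt_lam ^ (z + z).
Proof.
rewrite /lam (_ : 1%R = (1/2 + 1/2)%R); last by field.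
by rewrite -lam_powD expfzMl sqrt_lamXD.
Qed.

Definition weyl (p q : int) : term := (sqrt_lam ^ (p * q), p, q).

Lemma tmul_sqrt_lam (x y p q p' q' : int) :
  tmul theta (sqrt_lam ^ x, p, q) (sqrt_lam ^ y, p', q') =
  (sqrt_lam ^ (x + y + 2 * q * p'), p + p', q + q').
Proof.
rewrite /tmul /tc /tp /tq /= lamXz !sqrt_lamXD.
by congr (_ ^ _, _, _); ring.
Qed.

Lemma tpow_weyl (p q n : int) : tpow theta (weyl p q) n = weyl (n * p) (n * q).
Proof.
have iter_weyl r s (j : nat) : iter j (tmul theta (weyl r s)) tone = weyl (j%:Z * r) (j%:Z * s).
  elim: j => [|j IH]; first by rewrite /weyl /tone !mul0r expr0z.
  by rewrite iterS IH /weyl tmul_sqrt_lam intS; congr (_ ^ _, _, _); ring.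
case: n => k; first exact: iter_weyl.
rewrite /tpow.
have -> : tinv theta (weyl p q) = weyl (- p) (- q).
  rewrite /tinv /weyl /tc /tp /tq /= lamXz invr_expz sqrt_lamXD.
  by congr (_ ^ _, _, _); ring.
by rewrite iter_weyl NegzE /weyl; congr (_ ^ _, _, _); ring.
Qed.

Lemma himg_weyl (a b c d n m : int) :
  himg theta (weyl a b) (weyl c d) n m =
  (sqrt_lam ^ (n * n * a * b + m * m * c * d + 2 * n * b * m * c),
   n * a + m * c, n * b + m * d).
Proof.
rewrite /himg !tpow_weyl /weyl tmul_sqrt_lam.
by congr (_ ^ _, _, _); ring.
Qed.

End SquareRoot.

Lemma himg_minus1 theta (p q : int) :
  himg theta minus1_g1 minus1_g2 p q = (1, - p, - q).
Proof.
have -> : minus1_g1 = weyl theta (-1) 0 by rewrite /weyl mulr0 expr0z.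
have -> : minus1_g2 = weyl theta 0 (-1) by rewrite /weyl mul0r expr0z.
by rewrite himg_weyl -(expr0z (sqrt_lam theta)); congr (_ ^ _, _, _); ring.
Qed.

Lemma himg_mom theta (n m : int) :
  himg theta mom_g1 (mom_g2 theta) n m =
  (sqrt_lam theta ^ (- (m * m) - 2 * n * m), - m, n + m).
Proof.
have -> : mom_g1 = weyl theta 0 1 by rewrite /weyl mul0r expr0z.
have -> : mom_g2 theta = weyl theta (-1) 1 by rewrite /mom_g2 lam_pow_neg_half.
by rewrite himg_weyl; congr (_ ^ _, _, _); ring.
Qed.

Definition both_even (k l : int) : bool := ((k %% 2)%Z == 0) && ((l %% 2)%Z == 0).

Lemma both_even_shift (k l p q : int) : both_even (k + 2 * p) (l + 2 * q) = both_even k l.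
Proof. by rewrite /both_even; apply/idP/idP => /andP[/eqP ? /eqP ?]; apply/andP; split; apply/eqP; lia. Qed.

Lemma both_even_rot (n m : int) : both_even (- m) (n + m) = both_even n m.
Proof. by rewrite /both_even; apply/idP/idP => /andP[/eqP ? /eqP ?]; apply/andP; split; apply/eqP; lia. Qed.

Definition inv_series theta (al be : Cplx) : series :=
  fun k l => (if both_even k l then al else be) * sqrt_lam theta ^ (k * l).

Lemma inv_series_H0 theta al be : H0_twisted theta (inv_series theta al be).
Proof.
move=> a; apply: functional_extensionality => k; apply: functional_extensionality => l.
rewrite /lmul /rmul /act big_map; apply: eq_bigr => -[[c p] q] _.
rewrite himg_minus1 /tmul /tc /tp /tq /inv_series /=.
have -> : k - - p = k - p + 2 * p by ring.
have -> : l - - q = l - q + 2 * q by ring.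
rewrite both_even_shift !lamXz mulr1 mulrCA [_ * _ * c]mulrAC -!mulrA !sqrt_lamXD.
by congr (_ * (_ * _ ^ _)); ring.
Qed.

Lemma inv_series_Z6 theta al be : Z6_invariant theta (inv_series theta al be).
Proof.
move=> n m; cbv zeta; rewrite himg_mom /inv_series /tp /tq /tc /= both_even_rot.
by rewrite mulrCA sqrt_lamXD; congr (_ * _ ^ _); ring.
Qed.

Lemma H0_twisted_shift {theta} {phi : series} : H0_twisted theta phi ->
  forall a b p q : int, phi (a + 2 * p) (b + 2 * q) =
    sqrt_lam theta ^ ((a + 2 * p) * (b + 2 * q) - a * b) * phi a b.
Proof.
move=> h0 a b p q.
have := congr1 (fun F => F (a + p) (b + q)) (h0 [:: (1, p, q)]).
rewrite /lmul /rmul /act big_map !big_seq1 himg_minus1 /tmul /tc /tp /tq /=.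
have -> : a + p - - p = a + 2 * p by ring.
have -> : b + q - - q = b + 2 * q by ring.
rewrite !addrK !mul1r mulr1 !lamXz.
move/(canRL (mulfK (expfz_neq0 _ (sqrt_lam_neq0 theta)))) ->.
by rewrite invr_expz -mulrA sqrt_lamXD mulrC; congr (_ ^ _ * _); ring.
Qed.

Lemma modz2_cases (a : int) : (a %% 2)%Z = 0 \/ (a %% 2)%Z = 1.
Proof. lia. Qed.

Lemma H0_twisted_mod2 {theta} {phi : series} : H0_twisted theta phi ->
  forall a b : int, phi a b =
    sqrt_lam theta ^ (a * b - (a %% 2)%Z * (b %% 2)%Z) * phi (a %% 2)%Z (b %% 2)%Z.
Proof.
move=> h0 a b.
have divz_eq2 (x : int) : (x %% 2)%Z + 2 * (x %/ 2)%Z = x by rewrite addrC mulrC -divz_eq.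
by have := H0_twisted_shift h0 (a %% 2)%Z (b %% 2)%Z (a %/ 2)%Z (b %/ 2)%Z; rewrite !divz_eq2.
Qed.

Lemma inv_space_inv_series {theta} {phi : series} :
  inv_space theta phi -> phi = inv_series theta (phi 0 0) (phi 1 0).
Proof.
case=> h0 hz.
have phi01 : phi 0 1 = phi 1 0.
  have := hz 1 0; cbv zeta; rewrite himg_mom /tp /tq /tc /=.
  by rewrite !mulr0 oppr0 !addr0 expr0z mul1r.
have phi11 : phi 1 1 = sqrt_lam theta ^ 1 * phi 1 0.
  have := hz 0 1; cbv zeta; rewrite himg_mom /tp /tq /tc /= add0r phi01.
  rewrite (H0_twisted_mod2 h0 (-1) 1) (_ : ((-1) %% 2)%Z = 1) // (_ : (1 %% 2)%Z = 1) //.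
  move/(canRL (mulKf (expfz_neq0 _ (sqrt_lam_neq0 theta)))) ->.
  by rewrite mulrA invr_expz sqrt_lamXD; congr (_ ^ _ * _); ring.
apply: functional_extensionality => a; apply: functional_extensionality => b.
rewrite (H0_twisted_mod2 h0) /inv_series /both_even mulrC.
case: (modz2_cases a) => ->; case: (modz2_cases b) => -> /=; rewrite ?mulr0 ?mul0r ?subr0 //.
  by rewrite phi01.
by rewrite phi11 mulrAC sqrt_lamXD mulrC; congr (_ * _ ^ _); ring.
Qed.

Lemma inv_seriesE theta (al be : Cplx) : inv_series theta al be =
  (fun k l => al * inv_series theta 1 0 k l + be * inv_series theta 0 1 k l).
Proof.
apply: functional_extensionality => k; apply: functional_extensionality => l.
by rewrite /inv_series; case: ifP => _; rewrite !mulrA ?mulr1 ?mulr0 ?mul0r ?addr0 ?add0r.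
Qed.

Theorem mainTheorem11 (theta : Rdefinitions.R)
  (hirr : forall p q : Z, q <> Z0 -> (theta * IZR q)%R <> IZR p) :
  exists e1 e2 : series,
    inv_space theta e1 /\ inv_space theta e2 /\
    forall phi : series, inv_space theta phi ->
      exists! ab : Cplx * Cplx, phi = (fun k l => ab.1 * e1 k l + ab.2 * e2 k l).
Proof.
(* The argument holds for every [theta]. *)
have inv al be : inv_space theta (inv_series theta al be).
  by split; [exact: inv_series_H0 | exact: inv_series_Z6].
exists (inv_series theta 1 0), (inv_series theta 0 1).
do 2 (split; first exact: inv).
move=> phi hphi; exists (phi 0 0, phi 1 0); split.
  by rewrite {1}(inv_space_inv_series hphi) inv_seriesE.
by move=> [x y] ->; rewrite /inv_series /= !mulr0 expr0z !mulr1 !mulr0 addr0 add0r.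
Qed.
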